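(* Let $q = p^l$ with $p$ prime and $l \geq 1$ an integer, and let $\mathbb{F}_q$ be the finite field with $q$ elements. Let $1 \leq k \leq m$ be integers and let $$Q(x_1,\ldots,x_m) = \sum_{I \subseteq \{1,\ldots,m\},\ \#I = k} \delta_I \prod_{i \in I} x_i,$$ where the coefficients $\delta_I \in \mathbb{F}_q$ are not all zero. Let $\mathcal{Z} = \{(y_1,\ldots,y_m) \in \mathbb{F}_q^m : Q(y_1,\ldots,y_m) = 0\}$ be the set of zeros of $Q$. Then $$q^{m-k}(q-1)^{k-1} \leq \#\mathcal{Z} \leq q^{m-k}\left(q^k - (q-1)^k\right).$$
   Context: In this paper, a ''homogenous polynomial of degree $k$'' in the variables $x_1,\ldots,x_m$ over $\mathbb{F}_q$ means a polynomial of the displayed form: an $\mathbb{F}_q$-linear combination, with not all coefficients zero, of the square-free monomials $\prod_{i \in I} x_i$ over subsets $I \subseteq \{1,\ldots,m\}$ of cardinality exactly $k$. $\#$ denotes cardinality. *)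

From mathcomp Require Import all_boot all_algebra all_field.
Set Implicit Arguments. Unset Strict Implicit. Unset Printing Implicit Defensive.
Import GRing.Theory.
Local Open Scope ring_scope.

Definition homQ (F : finFieldType) (m k : nat) (delta : {set 'I_m} -> F)
  (y : {ffun 'I_m -> F}) : F :=
  \sum_(I : {set 'I_m} | #|I| == k) delta I * \prod_(i in I) y i.

Definition zeroset (F : finFieldType) (m k : nat) (delta : {set 'I_m} -> F)
  : {set {ffun 'I_m -> F}} :=
  [set y | homQ k delta y == 0].

From mathcomp Require Import all_boot all_algebra all_field.
Set Implicit Arguments. Unset Strict Implicit. Unset Printing Implicit Defensive.
Import GRing.Theory.

(* Write the square-free polynomial as Q = y_j * G + H, where G (the partial
   derivative in y_j) and H do not depend on y_j.  Wherever G(y) <> 0, the map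
   t |-> t * G(y) + H(y) is a bijection of F, so on that line Q has exactly
   one zero and q - 1 non-zeros.  Induction on the degree d then shows that a
   nonzero square-free polynomial of degree <= d has at least
   (q-1)^d q^(m-d) non-zeros, which is the upper bound on zeros; applied to
   G, of degree <= k - 1, it yields the lower bound q^(m-k) (q-1)^(k-1). *)


Lemma leq_scale_trans (a g n s r : nat) :
  (0 < r)%N -> (a * r <= g)%N -> (g * s <= n * r)%N -> (a * s <= n)%N.
Proof.
move=> r_gt0 ag gn; rewrite -(leq_pmul2r r_gt0) mulnAC.
exact: leq_trans (leq_mul ag (leqnn s)) gn.
Qed.

Section SquareFreeEvaluation.
Variables (F : finFieldType) (m : nat).
Local Notation point := {ffun 'I_m -> F}.
Local Notation coefs := ({set 'I_m} -> F).
Local Notation q := #|F|.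
Local Open Scope ring_scope.

Definition sqfree_eval (c : coefs) (y : point) : F :=
  \sum_(I : {set 'I_m}) c I * \prod_(i in I) y i.

Definition fupd (y : point) (j : 'I_m) (t : F) : point :=
  [ffun i => if i == j then t else y i].

Lemma fupd_eq y j t : fupd y j t j = t.
Proof. by rewrite ffunE eqxx. Qed.

Lemma fupdK y j t : fupd (fupd y j t) j (y j) = y.
Proof. by apply/ffunP=> i; rewrite !ffunE; case: eqVneq => [->|]. Qed.

Definition sqfree_deg (c : coefs) (d : nat) :=
  forall I : {set 'I_m}, c I != 0 -> (#|I| <= d)%N.

Definition coef_partial (j : 'I_m) (c : coefs) : coefs :=
  fun I => if j \in I then 0 else c (j |: I).

Definition coef_drop (j : 'I_m) (c : coefs) : coefs :=
  fun I => if j \in I then 0 else c I.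

Lemma sqfree_eval_split (c : coefs) j y :
  sqfree_eval c y =
  y j * sqfree_eval (coef_partial j c) y + sqfree_eval (coef_drop j c) y.
Proof.
have drop_j (G H : {set 'I_m} -> F) :
    \sum_(I : {set 'I_m}) (if j \in I then 0 else G I) * H I =
    \sum_(I : {set 'I_m} | j \notin I) G I * H I.
  by rewrite [RHS]big_mkcond; apply: eq_bigr => I _; case: (j \in I); rewrite ?mul0r.
rewrite /sqfree_eval /coef_partial /coef_drop !drop_j mulr_sumr.
rewrite (bigID (fun I : {set 'I_m} => j \in I)) /=; congr (_ + _).
rewrite (reindex_onto (fun J => j |: J) (fun I => I :\ j)) /=; last first.
  by move=> I jI; rewrite setD1K.
apply: eq_big => [J|J jJ].
  rewrite setU11 /=; case: (boolP (j \in J)) => jJ; last by rewrite setU1K ?eqxx.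
  by apply/negbTE/eqP => E; move: jJ; rewrite -E setD11.
have jNJ : j \notin J by case/andP: jJ => _ /eqP <-; rewrite setD11.
by rewrite big_setU1 //= mulrCA.
Qed.

Lemma sqfree_eval_fupd (c : coefs) j y t :
  (forall I : {set 'I_m}, j \in I -> c I = 0) ->
  sqfree_eval c (fupd y j t) = sqfree_eval c y.
Proof.
move=> cj; apply: eq_bigr => I _.
have [/cj ->|jNI] := boolP (j \in I); first by rewrite !mul0r.
congr (_ * _); apply: eq_bigr => i iI; rewrite ffunE.
by case: eqVneq iI => // ->; rewrite (negbTE jNI).
Qed.

Lemma coef_partial_deg (c : coefs) j d :
  sqfree_deg c d.+1 -> sqfree_deg (coef_partial j c) d.
Proof.
move=> cd I; rewrite /coef_partial; case: ifPn => [_|jNI]; first by rewrite eqxx.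
by move/cd; rewrite cardsU1 jNI.
Qed.

Lemma coef_partial_neq0 (c : coefs) j (J : {set 'I_m}) :
  j \in J -> c J != 0 -> coef_partial j c (J :\ j) != 0.
Proof. by move=> jJ cJ; rewrite /coef_partial setD11 setD1K. Qed.

Lemma card_affine_in_coord (g h : point -> F) j (S : {set F}) :
  (forall y t, g (fupd y j t) = g y) -> (forall y t, h (fupd y j t) = h y) ->
  (#|[set y : point | g y != 0%R]| * #|S| <=
     #|[set y : point | (y j * g y + h y)%R \in S]| * #|F|)%N.
Proof.
move=> gj hj.
(* Move y along coordinate j to where y j * g y + h y = s; keeping y j makes this injective. *)
pose f (ys : point * F) := (fupd ys.1 j ((ys.2 - h ys.1) / g ys.1), ys.1 j).
rewrite -cardsT -!cardsX -(@card_in_imset _ _ f); last first.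
  move=> [y1 s1] [y2 s2] /setXP[+ _] _ [E1 E2] /=; rewrite inE => gy1.
  have ey : y1 = y2 by rewrite -(fupdK y1 j ((s1 - h y1) / g y1)) E1 E2 fupdK.
  subst y2; congr pair; move/(congr1 (fun z : point => z j)): E1.
  by rewrite !fupd_eq => /(mulIf (invr_neq0 gy1))/addIr.
apply/subset_leq_card/subsetP => _ /imsetP[[y s] /setXP[+ Ss] ->]; rewrite inE => gy.
by rewrite !inE andbT gj hj fupd_eq divfK ?subrK.
Qed.

Lemma sqfree_eval_const (c : coefs) y :
  (forall I : {set 'I_m}, c I != 0 -> I = set0) -> sqfree_eval c y = c set0.
Proof.
move=> supp0; rewrite /sqfree_eval (bigD1 set0) //= big_set0 mulr1 big1 ?addr0 //.
move=> I nI; have [->|/supp0 I0] := eqVneq (c I) 0; first exact: mul0r.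
by rewrite I0 eqxx in nI.
Qed.

Lemma card_sqfree_eval_const (c : coefs) :
  (forall I : {set 'I_m}, c I != 0 -> I = set0) -> c set0 != 0 ->
  #|[set y : point | sqfree_eval c y != 0]| = (q ^ m)%N.
Proof.
move=> supp0 cset0; rewrite -[in RHS](card_ord m) -card_ffun -cardsT.
by apply: eq_card => y; rewrite !inE sqfree_eval_const.
Qed.

Lemma card_sqfree_eval_partial (c : coefs) j (S : {set F}) :
  (#|[set y : point | sqfree_eval (coef_partial j c) y != 0%R]| * #|S| <=
     #|[set y : point | sqfree_eval c y \in S]| * q)%N.
Proof.
have gj y t : sqfree_eval (coef_partial j c) (fupd y j t) =
              sqfree_eval (coef_partial j c) y.
  by apply: sqfree_eval_fupd => I; rewrite /coef_partial => ->.
have hj y t : sqfree_eval (coef_drop j c) (fupd y j t) =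
              sqfree_eval (coef_drop j c) y.
  by apply: sqfree_eval_fupd => I; rewrite /coef_drop => ->.
apply: leq_trans (card_affine_in_coord S gj hj) _.
by rewrite leq_mul2r; apply/orP; right; apply/eq_leq/eq_card => y;
  rewrite !inE -sqfree_eval_split.
Qed.

Lemma card_field_gt0 : (0 < q)%N.
Proof. by apply/card_gt0P; exists 0. Qed.

Lemma card_sqfree_eval_neq0_lb d (c : coefs) :
  (d <= m)%N -> sqfree_deg c d -> (exists I, c I != 0) ->
  ((q - 1) ^ d * q ^ (m - d) <= #|[set y : point | sqfree_eval c y != 0%R]|)%N.
Proof.
elim: d c => [|d IH] c dm cd [I cI].
  have supp0 (J : {set 'I_m}) : c J != 0 -> J = set0.
    by move/cd; rewrite leqn0 cards_eq0 => /eqP.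
  by rewrite card_sqfree_eval_const ?expn0 ?mul1n ?subn0 // -(supp0 _ cI).
case: (pickP [pred J : {set 'I_m} | (J != set0) && (c J != 0)]) => [J|supp0].
  case/andP=> /set0Pn[j jJ] cJ.
  have g_bound := IH _ (ltnW dm) (coef_partial_deg cd)
                     (ex_intro _ (J :\ j) (coef_partial_neq0 jJ cJ)).
  have := card_sqfree_eval_partial c j [set~ 0].
  have -> : [set y : point | sqfree_eval c y \in [set~ 0]] =
            [set y | sqfree_eval c y != 0] by apply/setP => y; rewrite !inE.
  rewrite cardsC1 -subn1 => f_bound.
  rewrite -(subnSK dm) expnSr mulnA in g_bound.
  by rewrite expnSr mulnAC (leq_scale_trans card_field_gt0 g_bound f_bound).
have {}supp0 (J : {set 'I_m}) : c J != 0 -> J = set0.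
  by move=> cJ; apply/eqP; have := supp0 J; rewrite /= cJ andbT => /negbFE.
rewrite card_sqfree_eval_const //; last by rewrite -(supp0 _ cI).
rewrite -{2}(subnKC dm) expnD leq_mul2r.
by rewrite leq_exp2r ?leq_subr ?orbT.
Qed.

Lemma card_sqfree_eval_eq0_lb d (c : coefs) j (I : {set 'I_m}) :
  (d <= m)%N -> sqfree_deg c d -> j \in I -> c I != 0 ->
  ((q - 1) ^ d.-1 * q ^ (m - d) <= #|[set y : point | sqfree_eval c y == 0%R]|)%N.
Proof.
case: d => [|d] dm cd jI cI.
  by move: (cd _ cI); rewrite leqn0 cards_eq0 => /eqP I0; rewrite I0 inE in jI.
have g_bound := card_sqfree_eval_neq0_lb (ltnW dm) (coef_partial_deg cd)
                  (ex_intro _ (I :\ j) (coef_partial_neq0 jI cI)).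
have := card_sqfree_eval_partial c j [set 0].
have -> : [set y : point | sqfree_eval c y \in [set 0]] =
          [set y | sqfree_eval c y == 0] by apply/setP => y; rewrite !inE.
rewrite cards1 => f_bound.
rewrite -(subnSK dm) expnSr mulnA in g_bound.
by rewrite -[leqLHS]muln1 (leq_scale_trans card_field_gt0 g_bound f_bound).
Qed.

Lemma card_sqfree_eval_eq0_ub d (c : coefs) :
  (d <= m)%N -> sqfree_deg c d -> (exists I, c I != 0) ->
  (#|[set y : point | sqfree_eval c y == 0%R]| <=
     q ^ (m - d) * (q ^ d - (q - 1) ^ d))%N.
Proof.
move=> dm cd c_neq0.
have := cardsC [set y : point | sqfree_eval c y == 0]; rewrite card_ffun card_ord.
have -> : ~: [set y : point | sqfree_eval c y == 0] =
          [set y | sqfree_eval c y != 0] by apply/setP => y; rewrite !inE.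
rewrite mulnBr -expnD subnK // [(q ^ (m - d) * _)%N]mulnC => <-.
by rewrite -addnBA ?leq_addr ?card_sqfree_eval_neq0_lb.
Qed.

Definition homog_coef (k : nat) (delta : coefs) : coefs :=
  fun I => if #|I| == k then delta I else 0.

Lemma homQ_sqfree_eval k delta y :
  homQ k delta y = sqfree_eval (homog_coef k delta) y.
Proof.
rewrite /homQ /sqfree_eval big_mkcond; apply: eq_bigr => I _.
by rewrite /homog_coef; case: eqP; rewrite ?mul0r.
Qed.

Lemma homog_coef_deg k delta : sqfree_deg (homog_coef k delta) k.
Proof. by move=> I; rewrite /homog_coef; case: (#|I| =P k) => [->|]; rewrite ?eqxx. Qed.

Lemma zeroset_homog k delta :
  zeroset k delta = [set y : point | sqfree_eval (homog_coef k delta) y == 0].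
Proof. by apply/setP => y; rewrite !inE homQ_sqfree_eval. Qed.

End SquareFreeEvaluation.

Theorem theorem1 (p l : nat) (F : finFieldType) (m k : nat)
  (delta : {set 'I_m} -> F) :
  prime p -> (1 <= l)%N -> #|F| = (p ^ l)%N ->
  (1 <= k)%N -> (k <= m)%N ->
  (exists I : {set 'I_m}, #|I| = k /\ delta I != 0%R) ->
  let q := #|F| in
  (q ^ (m - k) * (q - 1) ^ (k - 1) <= #|zeroset k delta|)%N /\
  (#|zeroset k delta| <= q ^ (m - k) * (q ^ k - (q - 1) ^ k))%N.
Proof.
move=> _ _ _ k_gt0 km [I [cardI dI]] q.
have cI : homog_coef k delta I != 0%R by rewrite /homog_coef cardI eqxx.
have c_deg := @homog_coef_deg F m k delta.
rewrite zeroset_homog; split.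
  have [j jI] : exists j, j \in I by apply/set0Pn; rewrite -card_gt0 cardI.
  rewrite mulnC (subn1 k); exact: card_sqfree_eval_eq0_lb km c_deg jI cI.
exact: card_sqfree_eval_eq0_ub km c_deg (ex_intro _ I cI).
Qed.
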